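(* Let $K_1\subseteq K_2$ be fields, $n$ a positive integer, and $R=K_1+X^nK_2[[X]]$, i.e. the ring of formal power series $\sum_{i\ge0} a_iX^i$ with $a_0\in K_1$, $a_1=\dots=a_{n-1}=0$ and $a_i\in K_2$ for $i\ge n$. Then: (a) $R$ has absolutely irreducible elements if and only if $K_1=K_2$ and $n=1$; (b) $R$ has prime elements if and only if $K_1=K_2$ and $n=1$.
   Context: For an integral domain $R$, factorization notions refer to the monoid $(R\setminus\{0\},\cdot)$. An element is irreducible if it is a non-unit that is not a product of two non-units. Two factorizations into irreducibles $a_1\cdots a_n=b_1\cdots b_m$ of the same element are essentially the same if $n=m$ and, after re-indexing, $a_j$ and $b_j$ are associated for all $j$. An irreducible $r$ is absolutely irreducible if for every $n\in\mathbb N$, every factorization of $r^n$ into irreducibles is essentially the same as $r^n=r\cdots r$. *)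

From mathcomp Require Import all_boot all_algebra.
Set Implicit Arguments. Unset Strict Implicit. Unset Printing Implicit Defensive.
Import GRing.Theory.
Local Open Scope ring_scope.

Section PS.
Variable K : fieldType.

Definition pser := nat -> K.

Definition pone : pser := fun k => if k == 0%N then 1 else 0.
Definition pzero : pser := fun _ => 0.
Definition pmul (a b : pser) : pser :=
  fun k => \sum_(i < k.+1) a i * b (k - i)%N.

Definition pprod (s : seq pser) : pser := foldr pmul pone s.

Definition is_subfield (K1 : {pred K}) : Prop :=
  [/\ 1 \in K1,
      (forall x y, x \in K1 -> y \in K1 -> x - y \in K1),
      (forall x y, x \in K1 -> y \in K1 -> x * y \in K1) &
      (forall x, x \in K1 -> x^-1 \in K1)].

Definition inR (K1 : {pred K}) (n : nat) (a : pser) : Prop :=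
  a 0%N \in K1 /\ (forall i, (0 < i < n)%N -> a i = 0).

Variables (K1 : {pred K}) (n : nat).

Definition R_unit (u : pser) : Prop :=
  inR K1 n u /\ exists v, inR K1 n v /\ pmul u v = pone.

Definition R_irreducible (r : pser) : Prop :=
  [/\ inR K1 n r, r <> pzero, ~ R_unit r &
      forall b c, inR K1 n b -> inR K1 n c -> r = pmul b c ->
        R_unit b \/ R_unit c].

Definition R_assoc (a b : pser) : Prop :=
  exists u, R_unit u /\ a = pmul u b.

(* two lists are essentially the same: same length and, after re-indexing,
   pairwise associated *)
Inductive ess_same : seq pser -> seq pser -> Prop :=
| ess_nil : ess_same [::] [::]
| ess_cons a s t1 b t2 :
    R_assoc a b -> ess_same s (t1 ++ t2) -> ess_same (a :: s) (t1 ++ b :: t2).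

Fixpoint all_Prop (P : pser -> Prop) (s : seq pser) : Prop :=
  if s is a :: s' then P a /\ all_Prop P s' else True.

Definition R_factorization (s : seq pser) (x : pser) : Prop :=
  all_Prop R_irreducible s /\ pprod s = x.

Definition R_abs_irreducible (r : pser) : Prop :=
  R_irreducible r /\
  forall m : nat, forall s, R_factorization s (pprod (nseq m r)) ->
    ess_same s (nseq m r).

Definition R_divides (a b : pser) : Prop :=
  exists c, inR K1 n c /\ b = pmul a c.

Definition R_prime (p : pser) : Prop :=
  [/\ inR K1 n p, p <> pzero, ~ R_unit p &
      forall a b, inR K1 n a -> inR K1 n b -> R_divides p (pmul a b) ->
        R_divides p a \/ R_divides p b].

End PS.

From mathcomp Require Import all_boot all_algebra.
From mathcomp Require Import zify.
From Stdlib Require Import Classical FunctionalExtensionality.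
Set Implicit Arguments. Unset Strict Implicit. Unset Printing Implicit Defensive.
Import GRing.Theory.
Local Open Scope ring_scope.

(* Units of R are the series with nonzero constant term, so a nonunit of R lies
   in X^n K2[[X]].  If K1 <> K2 or n > 1 there is a unit u of K2[[X]] outside R,
   and p u lies in R for every nonunit p of R.  A prime p would divide (p u)^2 in
   R, hence p u, forcing u into R.  An irreducible r cannot lie in X^(2n) K2[[X]]
   (it would split off X^n), so r u and r u^-1 are still irreducible (a product
   of two nonunits lies in X^(2n) K2[[X]]), and r^2 = (r u)(r u^-1) is a second
   factorization, because r u ~ r would again put u into R.  When K1 = K2 and
   n = 1, R = K2[[X]] and X is prime and absolutely irreducible. *)

Section PowerSeries.
Variable K : fieldType.
Implicit Types a b c f w : pser K.

Definition ptrunc (N : nat) a : {poly K} := \poly_(i < N) a i.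

Lemma pmul_ptrunc N a b k : (k < N)%N -> pmul a b k = (ptrunc N a * ptrunc N b)`_k.
Proof.
move=> kN; rewrite coefM /pmul; apply: eq_bigr => i _; rewrite !coef_poly.
have hi := ltn_ord i.
by rewrite !ifT //; apply/idP; lia.
Qed.

Lemma eq_coefM_le (p p' q q' : {poly K}) j :
  (forall i, (i <= j)%N -> p`_i = p'`_i) ->
  (forall i, (i <= j)%N -> q`_i = q'`_i) -> (p * q)`_j = (p' * q')`_j.
Proof.
move=> hp hq; rewrite !coefM; apply: eq_bigr => i _.
have hi : (i <= j)%N by rewrite -ltnS ltn_ord.
by rewrite hp // hq // leq_subr.
Qed.

Lemma pmulC a b : pmul a b = pmul b a.
Proof.
apply: functional_extensionality => k.
by rewrite (@pmul_ptrunc k.+1 a b) // (@pmul_ptrunc k.+1 b a) // mulrC.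
Qed.

Lemma pmulA a b c : pmul a (pmul b c) = pmul (pmul a b) c.
Proof.
apply: functional_extensionality => k.
have trunc_pmul f g i : (i <= k)%N ->
    (ptrunc k.+1 (pmul f g))`_i = (ptrunc k.+1 f * ptrunc k.+1 g)`_i.
  by move=> ik; rewrite coef_poly ltnS ik; apply: pmul_ptrunc; rewrite ltnS.
rewrite (@pmul_ptrunc k.+1 a) // (@pmul_ptrunc k.+1 _ c) //.
rewrite (@eq_coefM_le _ (ptrunc k.+1 a) _ (ptrunc k.+1 b * ptrunc k.+1 c)) //;
  last exact: trunc_pmul.
by rewrite mulrA; apply: eq_coefM_le => // i /trunc_pmul ->.
Qed.

Definition pXn (m : nat) : pser K := fun i => if i == m then 1 else 0.

Lemma pmulXn m f j : pmul (pXn m) f j = if (m <= j)%N then f (j - m)%N else 0.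
Proof.
rewrite /pmul; case: leqP => hm.
  have hm' : (m < j.+1)%N by rewrite ltnS.
  rewrite (bigD1 (Ordinal hm')) //= /pXn eqxx mul1r big1 ?addr0 // => i hi.
  by rewrite ifF ?mul0r //; apply/negbTE; move: hi; rewrite -val_eqE.
rewrite big1 // => i _; rewrite /pXn ifF ?mul0r //.
by have := ltn_ord i => hi; apply/negbTE/eqP; lia.
Qed.

Lemma pmul1l a : pmul (pone K) a = a.
Proof.
by apply: functional_extensionality => j; rewrite (pmulXn 0 a j) subn0.
Qed.

Lemma pmul1r a : pmul a (pone K) = a.
Proof. by rewrite pmulC pmul1l. Qed.

Lemma pmul_coef0 a b : pmul a b 0 = a 0%N * b 0%N.
Proof. by rewrite /pmul big_ord1. Qed.

Definition vanishes_below (k : nat) a := forall i, (i < k)%N -> a i = 0.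

Lemma pXn_vanishes m : vanishes_below m (pXn m).
Proof. by move=> i im; rewrite /pXn ltn_eqF. Qed.

Lemma pmul_vanishes_below k l a b :
  vanishes_below k a -> vanishes_below l b -> vanishes_below (k + l) (pmul a b).
Proof.
move=> ha hb j hj; rewrite /pmul big1 // => i _.
have := ltn_ord i; case: (ltnP i k) => hik hi; first by rewrite ha ?mul0r.
by rewrite hb ?mulr0 //; lia.
Qed.

Lemma vanishes_pmulr k a b : vanishes_below k a -> vanishes_below k (pmul a b).
Proof. by move=> ha; rewrite -[k]addn0; apply: pmul_vanishes_below. Qed.

Lemma pmul_coef_vanishes k l a b : vanishes_below k a -> vanishes_below l b ->
  pmul a b (k + l)%N = a k * b l.
Proof.
move=> ha hb; have hk : (k < (k + l).+1)%N by lia.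
rewrite /pmul (bigD1 (Ordinal hk)) //= addKn big1 ?addr0 // => i.
rewrite -val_eqE /= => hik; have := ltn_ord i.
case: (ltnP i k) => hlt hi; first by rewrite ha ?mul0r.
by rewrite hb ?mulr0 //; lia.
Qed.

Lemma exists_order a : a <> pzero K -> exists k, a k != 0 /\ vanishes_below k a.
Proof.
move=> anz; have ex : exists i, a i != 0.
  apply: NNPP => hn; apply: anz; apply: functional_extensionality => i.
  by apply/eqP; apply: negbNE; apply/negP => h; apply: hn; exists i.
case: (ex_minnP ex) => k ak kmin; exists k; split => // j jk.
by apply/eqP; apply: negbNE; apply/negP => /kmin; lia.
Qed.

Lemma pmul_eq0 a b : pmul a b = pzero K -> a = pzero K \/ b = pzero K.
Proof.
move=> e; apply: NNPP => /not_or_and [/exists_order [k [ak ha]]].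
move=> /exists_order [l [bl hb]]; have := congr1 (fun f => f (k + l)%N) e.
by rewrite /= pmul_coef_vanishes // => /eqP; rewrite mulf_eq0 (negbTE ak) (negbTE bl).
Qed.

Lemma pmul_cancel a b c : a <> pzero K -> pmul a b = pmul a c -> b = c.
Proof.
move=> anz e; pose d := fun i => b i - c i.
have : pmul a d = pzero K.
  apply: functional_extensionality => k; rewrite /pmul /d /pzero.
  under eq_bigr do rewrite mulrBr.
  by rewrite sumrB -/(pmul a b k) -/(pmul a c k) e subrr.
case/pmul_eq0 => // d0; apply: functional_extensionality => i.
by apply/eqP; rewrite -subr_eq0; apply/eqP; apply: (congr1 (fun f => f i) d0).
Qed.

(* [pinv_rec a k] agrees with the inverse of [a] on the coefficients [0..k]. *)
Fixpoint pinv_rec a (k : nat) : pser K :=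
  match k with
  | 0 => fun _ => (a 0%N)^-1
  | k'.+1 => let f := pinv_rec a k' in
     fun j => if (j <= k')%N then f j
              else - (a 0%N)^-1 * \sum_(i < k'.+1) a i.+1 * f (k' - i)%N
  end.

Definition pinv a : pser K := fun j => pinv_rec a j j.

Lemma pinv_recE a k j : (j <= k)%N -> pinv_rec a k j = pinv a j.
Proof.
elim: k j => [|k IH] j hj; first by have -> : j = 0%N by lia.
rewrite /=; case: leqP => h; first exact: IH.
have -> : j = k.+1 by lia.
by rewrite /pinv /= ltnn.
Qed.

Lemma pinv_coef0 a : pinv a 0 = (a 0%N)^-1.
Proof. by []. Qed.

Lemma pinv_coefS a k :
  pinv a k.+1 = - (a 0%N)^-1 * \sum_(i < k.+1) a i.+1 * pinv a (k - i)%N.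
Proof.
rewrite {1}/pinv /= ltnn; congr (_ * _); apply: eq_bigr => i _.
by rewrite pinv_recE // leq_subr.
Qed.

Lemma pmul_pinv a : a 0%N != 0 -> pmul a (pinv a) = pone K.
Proof.
move=> a0; apply: functional_extensionality => -[|k].
  by rewrite pmul_coef0 pinv_coef0 divff.
rewrite /pmul big_ord_recl /= subn0 pinv_coefS mulrA mulrN divff // mulN1r.
by rewrite addNr.
Qed.

Definition pshift (m : nat) a : pser K := fun i => a (i + m)%N.

Lemma pshiftK m a : vanishes_below m a -> pmul (pXn m) (pshift m a) = a.
Proof.
move=> ha; apply: functional_extensionality => j; rewrite pmulXn.
by case: leqP => hj; [rewrite /pshift subnK | rewrite ha].
Qed.

End PowerSeries.

Lemma nseq_eq_cat_cons (T : Type) (x y : T) m s1 s2 :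
  s1 ++ y :: s2 = nseq m x -> y = x.
Proof. by elim: s1 m => [|z s1 IH] [|m] //= [] // _ /IH. Qed.

Section Ring.
Variables (K : fieldType) (K1 : {pred K}) (n : nat).
Hypothesis sf : is_subfield K1.
Hypothesis n_gt0 : (0 < n)%N.
Implicit Types a b c p r u w : pser K.

Lemma mem0_subfield : 0 \in K1.
Proof. by case: sf => h1 hB _ _; rewrite -(subrr 1); apply: hB. Qed.

Lemma R_unit_coef0 a : R_unit K1 n a -> a 0%N != 0.
Proof.
move=> [_ [v [_ e]]]; apply/eqP => a0; move: (congr1 (fun f => f 0%N) e).
by rewrite /= pmul_coef0 a0 mul0r => /eqP; rewrite eq_sym oner_eq0.
Qed.

Lemma inR_unit a : inR K1 n a -> a 0%N != 0 -> R_unit K1 n a.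
Proof.
move=> [aK ha] a0; split; first by split.
exists (pinv a); split; last exact: pmul_pinv.
split; first by rewrite pinv_coef0; case: sf => _ _ _; apply.
case=> // i hi; rewrite pinv_coefS big1 ?mulr0 // => j _.
by rewrite ha ?mul0r //; have := ltn_ord j; lia.
Qed.

Lemma R_nonunit_vanishes a : inR K1 n a -> ~ R_unit K1 n a -> vanishes_below n a.
Proof.
move=> ha hu [|i] hi; last by case: ha => _; apply.
by apply/eqP; apply: negbNE; apply/negP => a0; apply: hu; apply: inR_unit.
Qed.

Lemma vanishes_inR a : vanishes_below n a -> inR K1 n a.
Proof.
move=> ha; split; first by rewrite ha ?mem0_subfield.
by move=> i /andP [_ /ha].
Qed.

Lemma vanishes_nonunit a : vanishes_below n a -> ~ R_unit K1 n a.
Proof. by move=> ha /R_unit_coef0; rewrite ha ?eqxx. Qed.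

Lemma exists_unit_notin_R : ~ ((forall x, x \in K1) /\ n = 1%N) ->
  exists2 u, u 0%N != 0 & ~ inR K1 n u.
Proof.
move=> hnot; case: (classic (forall x, x \in K1)) => hall.
  have n_gt1 : (1 < n)%N by move: n_gt0 hnot; case: n => [|[|m]] //= _ [].
  exists (fun i => if (i <= 1)%N then 1 else 0); first exact: oner_neq0.
  by case=> _ /(_ 1%N); rewrite n_gt1 => /(_ isT) /eqP; rewrite oner_eq0.
have [x hx] := not_all_ex_not _ _ hall.
exists (fun i => if i == 0%N then x else 0); last by case.
by apply: contra_not_neq hx => ->; apply: mem0_subfield.
Qed.

Lemma R_irreducible_not_vanishes r :
  R_irreducible K1 n r -> ~ vanishes_below (n + n) r.
Proof.
move=> [_ _ _ hirr] hr.
have hr_n : vanishes_below n r by move=> i hi; apply: hr; lia.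
have hs : vanishes_below n (pshift n r) by move=> i hi; rewrite /pshift hr //; lia.
have hX := @pXn_vanishes K n.
have := hirr _ _ (vanishes_inR hX) (vanishes_inR hs) (esym (pshiftK hr_n)).
by case; apply: vanishes_nonunit.
Qed.

Lemma R_irreducible_pmul_unit r w :
  R_irreducible K1 n r -> w 0%N != 0 -> R_irreducible K1 n (pmul r w).
Proof.
move=> hirr w0; have [hr rnz rnu _] := hirr.
have rwv : vanishes_below n (pmul r w).
  exact/vanishes_pmulr/R_nonunit_vanishes.
have rwK : pmul (pmul r w) (pinv w) = r by rewrite -pmulA pmul_pinv // pmul1r.
split.
- exact: vanishes_inR.
- by case/pmul_eq0 => // w_eq0; move: w0; rewrite w_eq0 eqxx.
- exact: vanishes_nonunit.
move=> b c hb hc e; apply: NNPP => /not_or_and [bnu cnu].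
apply: (R_irreducible_not_vanishes hirr); rewrite -rwK; apply: vanishes_pmulr.
by rewrite e; apply: pmul_vanishes_below; apply: R_nonunit_vanishes.
Qed.

Lemma not_R_prime p : ~ ((forall x, x \in K1) /\ n = 1%N) -> ~ R_prime K1 n p.
Proof.
case/exists_unit_notin_R => u u0 uR [hp pnz pnu hprime].
have pv := R_nonunit_vanishes hp pnu.
have puR : inR K1 n (pmul p u) by apply/vanishes_inR/vanishes_pmulr.
have : R_divides K1 n p (pmul (pmul p u) (pmul p u)).
  exists (pmul (pmul p u) u).
  split; first by apply/vanishes_inR/vanishes_pmulr/vanishes_pmulr.
  by rewrite !pmulA [pmul (pmul p u) p]pmulC pmulA.
by case/(hprime _ _ puR puR) => -[d [dR e]]; apply: uR; rewrite (pmul_cancel pnz e).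
Qed.

Lemma ess_same_nseq_assoc a s m r :
  ess_same K1 n (a :: s) (nseq m r) -> R_assoc K1 n a r.
Proof.
move=> h; inversion h as [|a' s' t1 b t2 hab _ ea et]; subst.
by rewrite -(nseq_eq_cat_cons et).
Qed.

Lemma not_R_abs_irreducible r :
  ~ ((forall x, x \in K1) /\ n = 1%N) -> ~ R_abs_irreducible K1 n r.
Proof.
case/exists_unit_notin_R => u u0 uR [rirr habs].
have rnz : r <> pzero K by case: rirr.
have v0 : pinv u 0 != 0 by rewrite pinv_coef0 invr_eq0.
have hf : R_factorization K1 n [:: pmul r u; pmul r (pinv u)] (pprod (nseq 2 r)).
  split; first by split; [|split] => //; apply: R_irreducible_pmul_unit.
  rewrite /pprod /= !pmul1r -pmulA (pmulC u) -pmulA.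
  by rewrite (pmulC (pinv u)) pmul_pinv // pmul1r.
have [w [[wR _] e]] := ess_same_nseq_assoc (habs 2%N _ hf).
by apply: uR; rewrite (pmulC w) in e; rewrite (pmul_cancel rnz e).
Qed.

End Ring.

Section FullRing.
Variables (K : fieldType) (K1 : {pred K}).
Hypothesis sf : is_subfield K1.
Hypothesis K1_full : forall x : K, x \in K1.
Implicit Types a b c u w : pser K.

Notation X := (pXn K 1).

Lemma full_inR a : inR K1 1 a.
Proof. by split => // -[|i]. Qed.

Lemma full_unit a : a 0%N != 0 -> R_unit K1 1 a.
Proof. exact/inR_unit/full_inR. Qed.

Lemma full_nonunit_vanishes a : ~ R_unit K1 1 a -> vanishes_below 1 a.
Proof. exact/R_nonunit_vanishes/full_inR. Qed.

Lemma X_irreducible : R_irreducible K1 1 X.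
Proof.
split; [exact: full_inR | | exact: (vanishes_nonunit (ltn0Sn 0) (@pXn_vanishes K 1)) |].
  by move/(congr1 (fun f => f 1%N)) => /eqP; rewrite /pXn /= oner_eq0.
move=> b c _ _ e; apply: NNPP => /not_or_and [bnu cnu].
have := @pmul_vanishes_below _ 1 1 _ _ (full_nonunit_vanishes bnu)
  (full_nonunit_vanishes cnu) 1%N isT.
by rewrite -e /pXn /= => /eqP; rewrite oner_eq0.
Qed.

Lemma full_irreducible_assoc a :
  R_irreducible K1 1 a -> exists2 w, w 0%N != 0 & a = pmul X w.
Proof.
move=> [_ _ anu hirr]; have av := full_nonunit_vanishes anu.
exists (pshift 1 a); last by rewrite pshiftK.
apply/negP => /eqP s0; have := hirr _ _ (full_inR _) (full_inR _) (esym (pshiftK av)).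
by case; apply: (vanishes_nonunit (ltn0Sn 0)) => -[].
Qed.

(* [u] collects the unit parts of the factors whose X has already been cancelled. *)
Lemma full_factorization_Xpow s m u : u 0%N != 0 ->
  all_Prop (R_irreducible K1 1) s -> pprod s = pmul u (pprod (nseq m X)) ->
  ess_same K1 1 s (nseq m X).
Proof.
elim: s m u => [|a s IH] [|m] u u0 /= hs e; first by constructor.
- move: (congr1 (fun f => f 0%N) e); rewrite /= !pmul_coef0 /pXn /pone /=.
  by rewrite mul0r mulr0 => /eqP; rewrite oner_eq0.
- have [w _ ea] := full_irreducible_assoc hs.1.
  move: (congr1 (fun f => f 0%N) e); rewrite ea pmul1r !pmul_coef0 /pXn /=.
  by rewrite !mul0r => /eqP; rewrite eq_sym (negbTE u0).
have [w w0 ea] := full_irreducible_assoc hs.1.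
have Xnz : X <> pzero K by case: X_irreducible.
have e_w : pmul w (pprod s) = pmul u (pprod (nseq m X)).
  by apply: (pmul_cancel Xnz); rewrite pmulA -ea e !pmulA (pmulC u).
have e' : pprod s = pmul (pmul (pinv w) u) (pprod (nseq m X)).
  by rewrite -pmulA -e_w pmulA (pmulC (pinv w)) pmul_pinv // pmul1l.
apply: (@ess_cons _ _ _ a s [::] X (nseq m X)).
  by exists w; split; [exact: full_unit | rewrite ea pmulC].
apply: IH e'; last exact: hs.2.
by rewrite pmul_coef0 pinv_coef0 mulf_neq0 ?invr_eq0.
Qed.

Lemma X_abs_irreducible : R_abs_irreducible K1 1 X.
Proof.
split; first exact: X_irreducible.
move=> m s [hs e]; apply: (@full_factorization_Xpow _ _ (pone K)) => //.
  by rewrite oner_neq0.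
by rewrite pmul1l.
Qed.

Lemma X_prime : R_prime K1 1 X.
Proof.
have [XR Xnz Xnu _] := X_irreducible; split => //.
move=> a b _ _ [c [_ e]]; have := congr1 (fun f => f 0%N) e.
rewrite /= !pmul_coef0 /pXn /= mul0r => /eqP; rewrite mulf_eq0.
have X_divides f : f 0%N = 0 -> R_divides K1 1 X f.
  by exists (pshift 1 f); split; [exact: full_inR | rewrite pshiftK // => -[]].
by case/orP => /eqP /X_divides; [left | right].
Qed.

End FullRing.

Theorem mainTheorem2 (K2 : fieldType) (K1 : {pred K2}) (n : nat) :
  is_subfield K1 -> (0 < n)%N ->
  ((exists r, R_abs_irreducible K1 n r) <->
     ((forall x : K2, x \in K1) /\ n = 1%N)) /\
  ((exists p, R_prime K1 n p) <->
     ((forall x : K2, x \in K1) /\ n = 1%N)).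
Proof.
move=> sf n_gt0; split; split.
- by case=> r hr; apply: NNPP => hnot; apply: not_R_abs_irreducible hr.
- by case=> K1_full ->; exists (pXn K2 1); apply: X_abs_irreducible.
- by case=> p hp; apply: NNPP => hnot; apply: not_R_prime hp.
- by case=> K1_full ->; exists (pXn K2 1); apply: X_prime.
Qed.
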